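(* Every GSWNC ring is strongly $\pi$-regular, i.e., for every $a \in R$ there exists $n \in \mathbb{N}$ such that $a^n \in a^{n+1}R$.
   Context: All rings are associative with identity. An element $a$ of a ring is strongly weakly nil-clean if there exist an idempotent $e$ and a nilpotent $q$ with $eq = qe$ such that $a = q + e$ or $a = q - e$. A ring is GSWNC if every non-invertible element is strongly weakly nil-clean. *)

From mathcomp Require Import all_boot all_algebra.
Set Implicit Arguments. Unset Strict Implicit. Unset Printing Implicit Defensive.
Import GRing.Theory.
Local Open Scope ring_scope.

Definition invertible (R : nzRingType) (a : R) : Prop :=
  exists b : R, a * b = 1 /\ b * a = 1.

Definition idempotent (R : nzRingType) (e : R) : Prop := e * e = e.

Definition nilpotent (R : nzRingType) (q : R) : Prop := exists n : nat, q ^+ n = 0.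

Definition strongly_weakly_nil_clean (R : nzRingType) (a : R) : Prop :=
  exists e q : R, idempotent e /\ nilpotent q /\ e * q = q * e /\
    (a = q + e \/ a = q - e).

Definition GSWNC (R : nzRingType) : Prop :=
  forall a : R, ~ invertible a -> strongly_weakly_nil_clean a.

Definition strongly_pi_regular (R : nzRingType) : Prop :=
  forall a : R, exists n : nat, exists x : R, a ^+ n = a ^+ n.+1 * x.

(** If [a] is a unit then [a^0 = a * a^-1]. Otherwise [a = ±(e + q)] with [e]
    idempotent, [q] nilpotent of index [m] and [eq = qe].  Then [1 + q] is
    invertible, [a' := e + q = (1 + q) - (1 - e)] and [a'^m (1 - e) = q^m (1 - e) = 0],
    so [a'^(m+1) (1 + q)^-1 = a'^m - a'^m (1 - e) (1 + q)^-1 = a'^m]. *)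

From Stdlib Require Import Classical.
From mathcomp Require Import all_boot all_algebra.
Set Implicit Arguments. Unset Strict Implicit. Unset Printing Implicit Defensive.
Import GRing.Theory.
Local Open Scope ring_scope.

Definition strongly_pi_regular_elt (R : nzRingType) (a : R) : Prop :=
  exists n : nat, exists x : R, a ^+ n = a ^+ n.+1 * x.

Section StronglyPiRegular.

Variable R : nzRingType.
Implicit Types a e q : R.

Lemma nilpotent_invertible1D q : nilpotent q -> invertible (1 + q).
Proof.
case=> m qm0; set s := \sum_(i < m) (- q) ^+ i.
have s_rinv : (q + 1) * s = 1.
  have := subrX1 (- q) m.
  by rewrite exprNn qm0 mulr0 sub0r -opprD mulNr => /oppr_inj.
have s_comm : GRing.comm (q + 1) s.
  apply: commr_sum => i _; apply/commrX/commrN/commr_sym.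
  exact: commrD (commr_refl q) (commr1 q).
by exists s; rewrite addrC -s_comm.
Qed.

Lemma strongly_pi_regular_invertible a : invertible a -> strongly_pi_regular_elt a.
Proof. by case=> b [ab1 _]; exists 0%N, b; rewrite expr0 expr1 ab1. Qed.

Lemma strongly_pi_regularN a :
  strongly_pi_regular_elt a -> strongly_pi_regular_elt (- a).
Proof.
case=> n [x anx]; exists n, (- x).
by rewrite exprSr -mulrA mulrNN (exprNn a n) {1}anx exprSr !mulrA.
Qed.

Lemma exprD_idem_mul1B e q n :
  idempotent e -> GRing.comm e q -> (e + q) ^+ n * (1 - e) = q ^+ n * (1 - e).
Proof.
move=> ee comm_eq; elim: n => [|n IHn]; first by rewrite !expr0.
have e_compl0 : e * (1 - e) = 0 by rewrite mulrBr mulr1 ee subrr.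
rewrite exprS -mulrA IHn mulrDl exprS -mulrA mulrA (commrX n comm_eq) -mulrA.
by rewrite e_compl0 mulr0 add0r.
Qed.

Lemma strongly_pi_regular_idemD_nil e q :
  idempotent e -> nilpotent q -> GRing.comm e q ->
  strongly_pi_regular_elt (e + q).
Proof.
move=> ee q_nil comm_eq; have [m qm0] := q_nil.
have [s [qs1 _]] := nilpotent_invertible1D q_nil.
have am_compl0 : (e + q) ^+ m * (1 - e) = 0.
  by rewrite exprD_idem_mul1B // qm0 mul0r.
have as_eq : (e + q) * s = 1 - (1 - e) * s.
  rewrite -[X in X - _]qs1 -mulrBl; congr (_ * _).
  by rewrite [RHS]addrC opprB addrA subrK.
exists m, s.
by rewrite exprSr -mulrA as_eq mulrBr mulr1 mulrA am_compl0 mul0r subr0.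
Qed.

Lemma strongly_weakly_nil_clean_pi_regular a :
  strongly_weakly_nil_clean a -> strongly_pi_regular_elt a.
Proof.
case=> e [q [ee [[m qm0] [comm_eq [->| ->]]]]].
  by rewrite addrC; apply: strongly_pi_regular_idemD_nil => //; exists m.
rewrite -opprB; apply: strongly_pi_regularN.
apply: strongly_pi_regular_idemD_nil => //; last exact: commrN.
by exists m; rewrite exprNn qm0 mulr0.
Qed.

End StronglyPiRegular.

Theorem corollary2p12 (R : nzRingType) : GSWNC R -> strongly_pi_regular R.
Proof.
move=> gswnc a; change (strongly_pi_regular_elt a).
have [a_inv | a_ninv] := classic (invertible a).
  exact: strongly_pi_regular_invertible.
exact: strongly_weakly_nil_clean_pi_regular (gswnc a a_ninv).
Qed.
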